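(* Let $X\in\mathbb{R}^{n\times p}$, $B^*\in\mathbb{R}^{p\times q}$, $E\in\mathbb{R}^{n\times q}$ and $Y=XB^*+E$. Let $f:\mathbb{R}^{n\times q}\to\mathbb{R}$ be a convex function, $\lambda>0$, and let $\hat B$ be a minimizer over $B\in\mathbb{R}^{p\times q}$ of $f(Y-XB)+\lambda\|B\|_{2,1}$. Let $\Delta=\hat B-B^*$ and $\mathcal S^*=\{j\in[p]:\|B^*_{j:}\|_2\ne0\}$. Assume there exists $Z\in\partial f(E)$ with $\|X^\top Z\|_{2,\infty}\le\lambda/2$. Then: (i) $\|\Delta_{\mathcal S^{*c}}\|_{2,1}\le3\|\Delta_{\mathcal S^*}\|_{2,1}$; (ii) if moreover $\Psi=\frac1nX^\top X$ satisfies $\Psi_{jj}=1$ and $\max_{j'\ne j}|\Psi_{jj'}|\le\frac{1}{7\alpha s}$ for all $j\in[p]$, for some integer $s\ge1$ with $|\mathcal S^*|\le s$ and some $\alpha>1$, then $$\|\Delta\|_{2,\infty}\le\Big(1+\frac{16}{7(\alpha-1)}\Big)\|\Psi\Delta\|_{2,\infty}.$$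
   Context: $M_{j:}$ is the $j$-th row of $M$; $\|M\|_{2,1}=\sum_j\|M_{j:}\|_2$, $\|M\|_{2,\infty}=\max_j\|M_{j:}\|_2$. For $\mathcal S\subset[p]$, $M_{\mathcal S}$ denotes the matrix equal to $M$ on the rows indexed by $\mathcal S$ and zero on the other rows; $\mathcal S^{*c}=[p]\setminus\mathcal S^*$. $\partial f$ is the convex subdifferential, with the inner product $\langle A,B\rangle=\operatorname{Tr}(A^\top B)$. *)

From HB Require Import structures.
From mathcomp Require Import all_boot all_order all_algebra.
From mathcomp Require Import reals.
Set Implicit Arguments. Unset Strict Implicit. Unset Printing Implicit Defensive.
Import Order.TTheory GRing.Theory Num.Theory.
Local Open Scope ring_scope.

Definition rownorm (R : realType) (m q : nat) (M : 'M[R]_(m, q)) (j : 'I_m) : R :=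
  Num.sqrt (\sum_(k < q) M j k ^+ 2).

Definition norm21 (R : realType) (m q : nat) (M : 'M[R]_(m, q)) : R :=
  \sum_(j < m) rownorm M j.

Definition norm2inf (R : realType) (m q : nat) (M : 'M[R]_(m, q)) : R :=
  \big[Num.max/0]_(j < m) rownorm M j.

Definition rowrestr (R : realType) (m q : nat) (S : {set 'I_m}) (M : 'M[R]_(m, q))
  : 'M[R]_(m, q) := \matrix_(j, k) (if j \in S then M j k else 0).

Definition convex_fun (R : realType) (n q : nat) (f : 'M[R]_(n, q) -> R) : Prop :=
  forall (A B : 'M[R]_(n, q)) (t : R), 0 <= t -> t <= 1 ->
    f (t *: A + (1 - t) *: B) <= t * f A + (1 - t) * f B.

Definition subdiff (R : realType) (n q : nat) (f : 'M[R]_(n, q) -> R)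
  (E Z : 'M[R]_(n, q)) : Prop :=
  forall A : 'M[R]_(n, q), f E + \tr (Z^T *m (A - E)) <= f A.

Definition row_support (R : realType) (p q : nat) (B : 'M[R]_(p, q)) : {set 'I_p} :=
  [set j | rownorm B j != 0].

(* Optimality of [Bhat] against [Bstar], combined with the subgradient inequality at [E],
   gives [lam (||Bhat||_{2,1} - ||Bstar||_{2,1}) <= <X^T Z, Delta> <= lam/2 ||Delta||_{2,1}],
   while decomposability of the group norm over the row support [S] of [Bstar] bounds the
   left side below by [lam (||Delta_{S^c}||_{2,1} - ||Delta_S||_{2,1})]; this is the cone
   condition (i). For (ii), expanding [<Delta_j, (Psi Delta)_j>] shows that each row of
   [Delta] has norm at most [||Psi Delta||_{2,oo} + c ||Delta||_{2,1}], [c] the mutual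
   coherence bound; by (i), [||Delta||_{2,1} <= 4 ||Delta_S||_{2,1} <= 4 s ||Delta||_{2,oo}],
   and the resulting term [4/(7 alpha) ||Delta||_{2,oo}] is absorbed into the left side. *)
From mathcomp Require Import all_boot all_order all_algebra.
From mathcomp Require Import reals.
From mathcomp Require Import ring lra.
Import Order.TTheory GRing.Theory Num.Theory.
Local Open Scope ring_scope.
Set Implicit Arguments. Unset Strict Implicit.

Section RowInnerProduct.
Variables (R : realType) (q : nat).

Definition rowdot m1 m2 (M : 'M[R]_(m1, q)) (P : 'M[R]_(m2, q)) i j :=
  \sum_(k < q) M i k * P j k.

Lemma rownorm_ge0 m1 (M : 'M[R]_(m1, q)) i : 0 <= rownorm M i.
Proof. exact: sqrtr_ge0. Qed.

Lemma rownorm_sqr m1 (M : 'M[R]_(m1, q)) i : rownorm M i ^+ 2 = rowdot M M i i.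
Proof.
rewrite sqr_sqrtr; last by apply: sumr_ge0 => k _; apply: sqr_ge0.
by apply: eq_bigr => k _; rewrite expr2.
Qed.

Lemma rowdot_sqr_le m1 m2 (M : 'M[R]_(m1, q)) (P : 'M[R]_(m2, q)) i j :
  rowdot M P i j ^+ 2 <= rownorm M i ^+ 2 * rownorm P j ^+ 2.
Proof.
rewrite !rownorm_sqr /rowdot.
set u := M i; set v := P j.
have gap_ge0 : 0 <= \sum_k \sum_l (u k * v l - u l * v k) ^+ 2.
  by apply: sumr_ge0 => k _; apply: sumr_ge0 => l _; apply: sqr_ge0.
have uv : (\sum_k u k * u k) * (\sum_l v l * v l) =
    \sum_k \sum_l u k * u k * (v l * v l).
  by rewrite mulr_suml; apply: eq_bigr => k _; rewrite mulr_sumr.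
have vu : (\sum_k u k * u k) * (\sum_l v l * v l) =
    \sum_k \sum_l u l * u l * (v k * v k).
  by rewrite uv exchange_big.
have dot : (\sum_k u k * v k) ^+ 2 = \sum_k \sum_l u k * v k * (u l * v l).
  by rewrite expr2 mulr_suml; apply: eq_bigr => k _; rewrite mulr_sumr.
have lagrange : \sum_k \sum_l (u k * v l - u l * v k) ^+ 2 =
    2 * ((\sum_k u k * u k) * (\sum_l v l * v l)) - 2 * (\sum_k u k * v k) ^+ 2.
  rewrite mulr2n mulrDl !mul1r {1}uv vu dot mulr_sumr -!big_split -sumrB /=.
  apply: eq_bigr => k _; rewrite mulr_sumr -!big_split -sumrB /=.
  by apply: eq_bigr => l _; ring.
rewrite lagrange in gap_ge0; lra.
Qed.

Lemma ler_norm_rowdot m1 m2 (M : 'M[R]_(m1, q)) (P : 'M[R]_(m2, q)) i j :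
  `|rowdot M P i j| <= rownorm M i * rownorm P j.
Proof.
have := rowdot_sqr_le M P i j; rewrite -real_normK ?num_real // -exprMn.
by rewrite ler_pXn2r // nnegrE ?mulr_ge0 ?rownorm_ge0.
Qed.

Lemma rowdot_le m1 m2 (M : 'M[R]_(m1, q)) (P : 'M[R]_(m2, q)) i j :
  rowdot M P i j <= rownorm M i * rownorm P j.
Proof. exact: le_trans (ler_norm _) (ler_norm_rowdot M P i j). Qed.

Lemma rownormD m1 (M N : 'M[R]_(m1, q)) i :
  rownorm (M + N) i <= rownorm M i + rownorm N i.
Proof.
rewrite -(ler_pXn2r (_ : 0 < 2)%N) ?nnegrE ?addr_ge0 ?rownorm_ge0 //.
have -> : rownorm (M + N) i ^+ 2 =
    rownorm M i ^+ 2 + 2 * rowdot M N i i + rownorm N i ^+ 2.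
  rewrite !rownorm_sqr /rowdot mulr_sumr -!big_split /=.
  by apply: eq_bigr => k _; rewrite !mxE; ring.
have := rowdot_le M N i i; nra.
Qed.

Lemma rownormN m1 (M : 'M[R]_(m1, q)) i : rownorm (- M) i = rownorm M i.
Proof. by congr Num.sqrt; apply: eq_bigr => k _; rewrite mxE sqrrN. Qed.

Lemma rowdot_mulmx m1 m2 m3 (M : 'M[R]_(m1, q)) (A : 'M[R]_(m2, m3))
    (P : 'M[R]_(m3, q)) i j :
  rowdot M (A *m P) i j = \sum_l A j l * rowdot M P i l.
Proof.
rewrite /rowdot; under eq_bigr do rewrite mxE mulr_sumr.
rewrite exchange_big /=; apply: eq_bigr => l _.
by rewrite mulr_sumr; apply: eq_bigr => k _; ring.
Qed.

End RowInnerProduct.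

Section GroupNorms.
Variables (R : realType) (m q : nat).
Implicit Types (M N : 'M[R]_(m, q)) (S : {set 'I_m}).

Lemma rownorm_rowrestr S M j :
  rownorm (rowrestr S M) j = if j \in S then rownorm M j else 0.
Proof.
rewrite /rownorm; case: ifP => jS.
  by congr Num.sqrt; apply: eq_bigr => k _; rewrite mxE jS.
by rewrite big1 ?sqrtr0 // => k _; rewrite mxE jS expr0n.
Qed.

Lemma norm21_rowrestrC S M :
  norm21 M = norm21 (rowrestr S M) + norm21 (rowrestr (~: S) M).
Proof.
rewrite /norm21 -big_split /=; apply: eq_bigr => j _.
by rewrite !rownorm_rowrestr in_setC; case: (j \in S); rewrite ?addr0 ?add0r.
Qed.

Lemma norm21_ge0 M : 0 <= norm21 M.
Proof. by apply: sumr_ge0 => j _; apply: rownorm_ge0. Qed.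

Lemma norm2inf_ge0 M : 0 <= norm2inf M.
Proof. by apply: bigmax_ge_id. Qed.

Lemma rownorm_le_norm2inf M j : rownorm M j <= norm2inf M.
Proof. exact: le_bigmax. Qed.

Lemma norm2inf_le M b : 0 <= b -> (forall j, rownorm M j <= b) -> norm2inf M <= b.
Proof. by move=> b_ge0 Mb; apply/bigmax_leP. Qed.

Lemma norm21_rowrestr_le S M : norm21 (rowrestr S M) <= #|S|%:R * norm2inf M.
Proof.
rewrite /norm21 (eq_bigr _ (fun j _ => rownorm_rowrestr S M j)) -big_mkcond /=.
rewrite -sum1_card natr_sum mulr_suml; apply: ler_sum => j _.
by rewrite mul1r rownorm_le_norm2inf.
Qed.

Lemma mxtrace_trmx_mulmx M N : \tr (M^T *m N) = \sum_j rowdot M N j j.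
Proof.
rewrite /mxtrace exchange_big /=; apply: eq_bigr => k _.
by rewrite mxE; apply: eq_bigr => j _; rewrite mxE.
Qed.

Lemma mxtrace_trmx_mulmx_le M N : \tr (M^T *m N) <= norm2inf M * norm21 N.
Proof.
rewrite mxtrace_trmx_mulmx /norm21 mulr_sumr; apply: ler_sum => j _.
apply: le_trans (rowdot_le _ _ _ _) _.
by rewrite ler_wpM2r ?rownorm_ge0 ?rownorm_le_norm2inf.
Qed.

Lemma norm21_support_decomposable (B D : 'M[R]_(m, q)) :
  norm21 (rowrestr (~: row_support B) D) - norm21 (rowrestr (row_support B) D)
  <= norm21 (B + D) - norm21 B.
Proof.
rewrite /norm21 -!sumrB; apply: ler_sum => j _.
rewrite !rownorm_rowrestr in_setC; case: (boolP (j \in row_support B)) => /= jS.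
  have := rownormD (B + D) (- D) j; rewrite addrK rownormN; lra.
have B0 : rownorm B j = 0 by apply/eqP; move: jS; rewrite inE negbK.
have := rownormD (- B) (B + D) j; rewrite addKr rownormN; lra.
Qed.

End GroupNorms.

Section Coherence.
Variables (R : realType) (p q : nat) (Psi : 'M[R]_p) (D : 'M[R]_(p, q)) (c : R).
Hypothesis Psi_diag : forall j, Psi j j = 1.
Hypothesis Psi_offdiag : forall j j', j' != j -> `|Psi j j'| <= c.
Hypothesis c_ge0 : 0 <= c.

Lemma rownorm_le_coherence j : rownorm D j <= norm2inf (Psi *m D) + c * norm21 D.
Proof.
set r := rownorm D j; set cross := \sum_(l | l != j) Psi j l * rowdot D D j l.
have r_ge0 : 0 <= r := rownorm_ge0 D j.
have expand : r ^+ 2 = rowdot D (Psi *m D) j j - cross.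
  by rewrite rownorm_sqr rowdot_mulmx (bigD1 j) //= Psi_diag mul1r addrK.
have diag_term : rowdot D (Psi *m D) j j <= r * norm2inf (Psi *m D).
  apply: le_trans (rowdot_le _ _ _ _) _.
  by rewrite ler_wpM2l ?rownorm_le_norm2inf.
have cross_term : `|cross| <= r * (c * norm21 D).
  apply: le_trans (ler_norm_sum _ _ _) _.
  apply: (@le_trans _ _ (\sum_(l | l != j) r * (c * rownorm D l))).
    apply: ler_sum => l lj; rewrite normrM mulrCA.
    by rewrite ler_pM ?normr_ge0 ?Psi_offdiag ?ler_norm_rowdot.
  rewrite /norm21 !mulr_sumr [leRHS](bigD1 j) //= ler_wpDl //.
  by rewrite !mulr_ge0 ?rownorm_ge0.
have rhs_ge0 : 0 <= norm2inf (Psi *m D) + c * norm21 D.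
  by rewrite addr_ge0 ?mulr_ge0 ?norm2inf_ge0 ?norm21_ge0.
have := ler_norm (- cross); rewrite normrN; nra.
Qed.

Lemma norm2inf_le_coherence : norm2inf D <= norm2inf (Psi *m D) + c * norm21 D.
Proof.
apply: norm2inf_le; last exact: rownorm_le_coherence.
by rewrite addr_ge0 ?mulr_ge0 ?norm2inf_ge0 ?norm21_ge0.
Qed.

End Coherence.

Section GroupLasso.
Variables (R : realType) (n p q : nat).
Variables (X : 'M[R]_(n, p)) (Bstar Bhat : 'M[R]_(p, q)) (E Z : 'M[R]_(n, q)).
Variables (f : 'M[R]_(n, q) -> R) (lam : R).
Hypothesis Bhat_le_Bstar :
  f (X *m Bstar + E - X *m Bhat) + lam * norm21 Bhat
  <= f (X *m Bstar + E - X *m Bstar) + lam * norm21 Bstar.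
Hypothesis Z_subgrad : subdiff f E Z.

Lemma group_lasso_basic_inequality :
  lam * (norm21 Bhat - norm21 Bstar) <= \tr ((X^T *m Z)^T *m (Bhat - Bstar)).
Proof.
have := Bhat_le_Bstar; rewrite (_ : _ - X *m Bstar = E); last first.
  by rewrite addrAC subrr add0r.
have := Z_subgrad (X *m Bstar + E - X *m Bhat).
have -> : X *m Bstar + E - X *m Bhat - E = - (X *m (Bhat - Bstar)).
  by rewrite mulmxBr addrAC addrK opprB.
rewrite mulmxN linearN /= mulmxA -[Z^T *m X]trmxK trmx_mul trmxK.
lra.
Qed.

Hypothesis lam_gt0 : 0 < lam.
Hypothesis Z_small : norm2inf (X^T *m Z) <= lam / 2.

Lemma group_lasso_cone :
  norm21 (rowrestr (~: row_support Bstar) (Bhat - Bstar))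
  <= 3 * norm21 (rowrestr (row_support Bstar) (Bhat - Bstar)).
Proof.
set S := row_support Bstar; set Delta := Bhat - Bstar.
have decomp := norm21_support_decomposable Bstar Delta.
rewrite [Bstar + _]addrC subrK -/S in decomp.
have split := norm21_rowrestrC S Delta.
set a := norm21 (rowrestr (~: S) Delta) in decomp split *.
set b := norm21 (rowrestr S Delta) in decomp split *.
have upper : lam * (a - b) <= lam * ((a + b) / 2).
  apply: le_trans (ler_wpM2l (ltW lam_gt0) decomp) _.
  apply: le_trans group_lasso_basic_inequality _.
  apply: le_trans (mxtrace_trmx_mulmx_le _ _) _.
  apply: le_trans (ler_wpM2r (norm21_ge0 _) Z_small) _.
  by rewrite split; lra.
rewrite ler_pM2l // in upper; lra.
Qed.

End GroupLasso.

(* The sharp constant here is [7 alpha / (7 alpha - 4)], which is below the stated one. *)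
Lemma absorb_coherence_bound (R : realFieldType) (x y alpha : R) :
  1 < alpha -> 0 <= y -> x <= y + 4 / (7 * alpha) * x ->
  x <= (1 + 16 / (7 * (alpha - 1))) * y.
Proof.
move=> alpha_gt1 y_ge0 x_le.
have alpha7_gt0 : 0 < 7 * alpha by lra.
have absorbed : (7 * alpha - 4) * x <= 7 * alpha * y.
  have cancel : 7 * alpha * (4 / (7 * alpha) * x) = 4 * x.
    by field; rewrite gt_eqF //; lra.
  by have := ler_wpM2l (ltW alpha7_gt0) x_le; rewrite mulrDr cancel; lra.
have -> : 1 + 16 / (7 * (alpha - 1)) = (7 * alpha + 9) / (7 * (alpha - 1)).
  by field; rewrite subr_eq0 gt_eqF.
rewrite mulrAC ler_pdivlMr; [nra | lra].
Qed.

Theorem lemma2 (R : realType) (n p q : nat)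
  (X : 'M[R]_(n, p)) (Bstar : 'M[R]_(p, q)) (E : 'M[R]_(n, q))
  (f : 'M[R]_(n, q) -> R) (lam : R) (Bhat : 'M[R]_(p, q)) :
  convex_fun f ->
  0 < lam ->
  (forall B : 'M[R]_(p, q),
     f ((X *m Bstar + E) - X *m Bhat) + lam * norm21 Bhat
     <= f ((X *m Bstar + E) - X *m B) + lam * norm21 B) ->
  (exists Z : 'M[R]_(n, q), subdiff f E Z /\ norm2inf (X^T *m Z) <= lam / 2) ->
  let Delta := Bhat - Bstar in
  let S := row_support Bstar in
  norm21 (rowrestr (~: S) Delta) <= 3 * norm21 (rowrestr S Delta) /\
  (forall (s : nat) (alpha : R),
     (1 <= s)%N -> (#|S| <= s)%N -> 1 < alpha ->
     let Psi := (n%:R)^-1 *: (X^T *m X) in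
     (forall j : 'I_p, Psi j j = 1) ->
     (forall j j' : 'I_p, j' != j -> `|Psi j j'| <= (7 * alpha * s%:R)^-1) ->
     norm2inf Delta <= (1 + 16 / (7 * (alpha - 1))) * norm2inf (Psi *m Delta)).
Proof.
move=> _ lam_gt0 Bhat_opt [Z [Z_subgrad Z_small]] Delta S.
have cone := group_lasso_cone (Bhat_opt Bstar) Z_subgrad lam_gt0 Z_small.
split=> // s alpha s_ge1 card_S alpha_gt1 Psi Psi_diag Psi_offdiag.
have s_gt0 : (0 : R) < s%:R by rewrite ltr0n.
have c_ge0 : 0 <= (7 * alpha * s%:R)^-1 by rewrite invr_ge0 !mulr_ge0 //; lra.
have Delta_S : norm21 (rowrestr S Delta) <= s%:R * norm2inf Delta.
  apply: le_trans (norm21_rowrestr_le _ _) _.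
  by rewrite ler_wpM2r ?norm2inf_ge0 ?ler_nat.
have Delta_21 : norm21 Delta <= 4 * (s%:R * norm2inf Delta).
  by rewrite (norm21_rowrestrC S); lra.
apply: absorb_coherence_bound => //; first exact: norm2inf_ge0.
apply: le_trans (norm2inf_le_coherence Delta Psi_diag Psi_offdiag c_ge0) _.
have -> : 4 / (7 * alpha) * norm2inf Delta =
    (7 * alpha * s%:R)^-1 * (4 * (s%:R * norm2inf Delta)).
  by field; rewrite !gt_eqF //; lra.
by rewrite lerD2l ler_wpM2l.
Qed.
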